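(* Let $K$ be a field, $T$ a subgroup of $K^\times$, and suppose the factor hyperfield $F=K_T$ admits a Krasner valuation $w$. Then there exist a valuation $v$ on $K$ with $vK=wF$ and an initial segment $\rho$ of $vK$ containing $0$ such that $T=1+\mathcal{M}_v^\rho:=\{x\in K: v(x-1)\notin\rho\}$ (so $F=K_\rho:=K_{1+\mathcal{M}_v^\rho}$) and $w=v_\rho$, where $v_\rho(xT):=vx$.
   Context: A hyperfield is $(F,+,\cdot,0,1)$ with $+$ a multivalued operation making $(F,+,0)$ a canonical hypergroup (associative, commutative, unique inverses $-x$ with $0\in x+(-x)$, and $z\in x+y\Rightarrow y\in z+(-x)$; write $x-y:=x+(-y)$ and $A+B:=\bigcup_{a\in A,b\in B}a+b$), $(F,\cdot)$ commutative with $0$ absorbing, $x(y+z)=xy+xz$, and $F\setminus\{0\}$ an abelian group with neutral $1\neq0$. Valuation on a hyperfield $F$: for an ordered abelian group $\Gamma$ and $\infty>\Gamma$ with $\gamma+\infty=\infty+\gamma=\infty$, a surjective map $v:F\to\Gamma\cup\{\infty\}$ with $vx=\infty\iff x=0$, $v(xy)=vx+vy$, $z\in x+y\Rightarrow vz\ge\min\{vx,vy\}$; $vF:=v(F\setminus\{0\})$. Fields are hyperfields with singleton sums. Factor hyperfield: for a field $K$ and a subgroup $T\le K^\times$, $K_T$ is the set of cosets $xT$ with $xT+yT:=\{(x+yt)T:t\in T\}$, $xT\cdot yT=xyT$. An initial segment of an ordered set $\Gamma$ is $\rho\subseteq\Gamma$ with $\delta\in\rho,\gamma<\delta\Rightarrow\gamma\in\rho$.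 For $\gamma\in\Gamma$, $\rho+\gamma:=\{\delta+\gamma:\delta\in\rho\}$, and for $\alpha\in\Gamma\cup\{\infty\}$, ''$\alpha>\rho+\gamma$'' means $\alpha\notin\rho+\gamma$. Krasner valuation: a valuation $v$ on a hyperfield $F$ such that (KVH1) for all $x,y\in F$ with $0\notin x+y$, the set $v(x+y)$ is a singleton; (KVH2) there is an initial segment $\rho_v$ of $vF$ with $0\in\rho_v$ (the norm) such that for all $x,y,z,t\in F$ with $z\in x+y$: $t\in x+y$ iff $vs>\rho_v+\min\{vx,vy\}$ for all $s\in z-t$. *)

From HB Require Import structures.
From mathcomp Require Import all_boot all_order all_algebra.
From Stdlib Require Import ClassicalEpsilon.
Set Implicit Arguments. Unset Strict Implicit. Unset Printing Implicit Defensive.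
Import Order.TTheory GRing.Theory Num.Theory.
Local Open Scope ring_scope.

Definition ordered_abelian_group (G : porderZmodType) : Prop :=
  (forall a b : G, a <= b \/ b <= a) /\
  (forall a b c : G, a <= b -> a + c <= b + c).

(* Γ ∪ {∞}: [Some g] is g ∈ Γ, [None] is ∞. *)
Definition eleq (G : porderZmodType) (a b : option G) : Prop :=
  match a, b with
  | _, None => True
  | None, Some _ => False
  | Some a', Some b' => a' <= b'
  end.

Definition eadd (G : porderZmodType) (a b : option G) : option G :=
  match a, b with
  | Some a', Some b' => Some (a' + b')
  | _, _ => None
  end.

Definition emin (G : porderZmodType) (a b : option G) : option G :=
  match a, b with
  | None, _ => b
  | _, None => a
  | Some a', Some b' => if a' <= b' then a else b
  end.

(* initial segment rho of Γ (here vF = Γ, since valuations are surjective) *)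
Definition initial_segment (G : porderZmodType) (rho : G -> Prop) : Prop :=
  forall d g : G, rho d -> g < d -> rho g.

(* "alpha > rho + gamma"  :=  alpha ∉ rho + gamma = {d + gamma : d ∈ rho} *)
Definition above_shift (G : porderZmodType) (rho : G -> Prop) (gamma : G)
  (alpha : option G) : Prop :=
  match alpha with
  | None => True
  | Some a => ~ (exists d, rho d /\ a = d + gamma)
  end.

(* [hadd x y z] means z ∈ x + y. *)
Record hyperstruct := HyperStruct {
  hcarrier :> Type;
  hzero : hcarrier;
  hone : hcarrier;
  hadd : hcarrier -> hcarrier -> hcarrier -> Prop;
  hneg : hcarrier -> hcarrier;
  hmul : hcarrier -> hcarrier -> hcarrier
}.

Definition field_hs (K : fieldType) : hyperstruct :=
  @HyperStruct K 0 1 (fun x y z => z = x + y) (fun x => - x) (fun x y => x * y).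

Definition is_valuation (F : hyperstruct) (G : porderZmodType)
  (v : F -> option G) : Prop :=
  (forall a : option G, exists x : F, v x = a) /\
  (forall x : F, v x = None <-> x = hzero F) /\
  (forall x y : F, v (hmul x y) = eadd (v x) (v y)) /\
  (forall x y z : F, hadd x y z -> eleq (emin (v x) (v y)) (v z)).

(* Krasner valuation.  In (KVH2), "rho + min{vx,vy}" is only defined for
   min{vx,vy} ∈ Γ, so the condition is imposed when min{vx,vy} is finite. *)
Definition is_krasner_valuation (F : hyperstruct) (G : porderZmodType)
  (v : F -> option G) : Prop :=
  is_valuation v /\
  (forall x y : F, ~ hadd x y (hzero F) ->
     exists a : option G,
       (forall z, hadd x y z -> v z = a) /\ (exists z, hadd x y z)) /\
  (exists rho : G -> Prop,
     initial_segment rho /\ rho 0 /\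
     forall (x y z t : F) (gamma : G),
       emin (v x) (v y) = Some gamma -> hadd x y z ->
       (hadd x y t <->
        forall s : F, hadd z (hneg t) s -> above_shift rho gamma (v s))).

Section Factor.
Variables (K : fieldType) (T : K -> Prop).

Definition is_subgroup_units : Prop :=
  T 1 /\ (forall x, T x -> x != 0) /\
  (forall x y, T x -> T y -> T (x * y)) /\ (forall x, T x -> T x^-1).

Definition coset_of (x : K) : K -> Prop := fun y => exists t, T t /\ y = x * t.

Definition coset := {S : K -> Prop | exists x, S = coset_of x}.

Definition mkcoset (x : K) : coset := exist _ (coset_of x) (ex_intro _ x erefl).

Definition crep (X : coset) : K :=
  proj1_sig (constructive_indefinite_description _ (proj2_sig X)).

Definition cadd (X Y Z : coset) : Prop :=
  exists x y t, X = mkcoset x /\ Y = mkcoset y /\ T t /\ Z = mkcoset (x + y * t).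

Definition factor_hyperfield : hyperstruct :=
  @HyperStruct coset (mkcoset 0) (mkcoset 1) cadd
    (fun X => mkcoset (- crep X)) (fun X Y => mkcoset (crep X * crep Y)).
End Factor.

(* The valuation on K is
   simply v x := w (xT), and the theorem says that T is the "rho-unit group"
   {x : v (x - 1) outside rho}.

   It then shows
   that w, read on representatives, is a valuation on K: it is constant on
   T-cosets, sends 1 and -1 to 0 (an ordered group has no 2-torsion) and is
   ultrametric.  Finally (KVH2), applied to 1T in 1T + 0T = {T} with
   min{w 1T, w 0T} = 0, characterises T as the set of x such that every
   element of 1T - xT has value outside rho.  The direction "v (x - 1)
   outside rho -> x in T" uses the decomposition
       a - x u = a (1 - u / a) + u (1 - x)        (a, u in T)
   together with the fact that the complement of rho is closed upwards. *)

From Stdlib Require Import ClassicalEpsilon ProofIrrelevance FunctionalExtensionality PropExtensionality.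
From HB Require Import structures.
From mathcomp Require Import all_boot all_order all_algebra.
From mathcomp Require Import ring.
Set Implicit Arguments. Unset Strict Implicit. Unset Printing Implicit Defensive.
Import Order.TTheory GRing.Theory Num.Theory.
Local Open Scope ring_scope.

Definition outside (G : porderZmodType) (rho : G -> Prop) (a : option G) : Prop :=
  match a with None => True | Some a' => ~ rho a' end.

(* The complement of an initial segment is closed upwards, in particular
   under the ultrametric inequality c >= min{a, b}. *)
Lemma outside_ultra (G : porderZmodType) (rho : G -> Prop) (a b c : option G) :
  initial_segment rho -> outside rho a -> outside rho b ->
  eleq (emin a b) c -> outside rho c.
Proof.
move=> Hinit; case: c => // c.
have up m : ~ rho m -> m <= c -> ~ rho c.
  move=> Hm; rewrite le_eqVlt => /orP [/eqP <- //|lt_mc] Hc.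
  exact/Hm/(Hinit _ _ Hc lt_mc).
case: a => [a|]; case: b => [b|] //=.
- by case: ifP => _ Ha Hb /=; [apply: up Ha|apply: up Hb].
- by move=> Ha _; apply: up.
- by move=> _ Hb; apply: up.
Qed.

Lemma above_shift0 (G : porderZmodType) (rho : G -> Prop) (a : option G) :
  above_shift rho 0 a <-> outside rho a.
Proof.
case: a => //= a; split.
- by move=> H Ha; apply: H; exists a; rewrite addr0.
- by move=> H [d [Hd E]]; apply: H; rewrite E addr0.
Qed.

Lemma ordered_double_eq0 (G : porderZmodType) (h : G) :
  ordered_abelian_group G -> h + h = 0 -> h = 0.
Proof.
move=> [Htot Htr] hh0.
by case: (Htot h 0) => le_h0; have := Htr _ _ h le_h0;
  rewrite add0r hh0 => le2; apply/eqP; rewrite eq_le le_h0 le2.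
Qed.

Lemma sig_eq_proof_irrelevant (A : Type) (P : A -> Prop) (a b : A)
  (pa : P a) (pb : P b) : a = b -> exist P a pa = exist P b pb.
Proof. by move=> E; subst b; f_equal; apply: proof_irrelevance. Qed.

Section FactorHyperfield.
Variables (K : fieldType) (T : K -> Prop).
Hypothesis HT : is_subgroup_units T.

Local Notation cos := (mkcoset T).
Local Notation KT := (factor_hyperfield T).

Lemma T1 : T 1. Proof. by case: HT. Qed.
Lemma T_neq0 x : T x -> x != 0. Proof. by case: HT => _ [H _]; apply: H. Qed.
Lemma TM x y : T x -> T y -> T (x * y). Proof. by case: HT => _ [_ [H _]]; apply: H. Qed.
Lemma TV x : T x -> T x^-1. Proof. by case: HT => _ [_ [_ H]]; apply: H. Qed.

Lemma coset_eq x y : cos x = cos y <-> exists t, T t /\ y = x * t.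
Proof.
split.
- move=> /(congr1 (@proj1_sig _ _)) /= E.
  have : coset_of T y y by exists 1; rewrite mulr1; split; [exact: T1|].
  by rewrite -E.
- case=> t [Tt ->]; apply: sig_eq_proof_irrelevant.
  apply: functional_extensionality => z; apply: propositional_extensionality.
  split; case=> s [Ts ->].
  + exists (t^-1 * s); split; first by apply: TM => //; apply: TV.
    by rewrite mulrA -(mulrA x) mulfV ?T_neq0 // mulr1.
  + by exists (t * s); split; [apply: TM|rewrite mulrA].
Qed.

Lemma coset_mulT x t : T t -> cos (t * x) = cos x.
Proof.
move=> Tt; apply/coset_eq; exists t^-1; split; first exact: TV.
by rewrite mulrAC mulfV ?T_neq0 // mul1r.
Qed.

Lemma coset_eq0 x : cos x = cos 0 <-> x = 0.
Proof.
split=> [/coset_eq [t [Tt /esym/eqP]]|-> //].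
by rewrite mulf_eq0 (negbTE (T_neq0 Tt)) orbF => /eqP.
Qed.

Lemma crepK (X : KT) : cos (crep X) = X.
Proof.
case: X => S p; rewrite /crep /=.
case: constructive_indefinite_description => x /= Hx.
by apply: sig_eq_proof_irrelevant; rewrite Hx.
Qed.

Lemma crep_coset x : exists t, T t /\ crep (cos x) = x * t.
Proof. by apply/coset_eq; rewrite crepK. Qed.

Lemma hmul_coset x y : hmul (cos x : KT) (cos y) = cos (x * y).
Proof.
have [a [Ta /= ->]] := crep_coset x; have [b [Tb ->]] := crep_coset y.
by rewrite mulrACA coset_eq; exists (a * b)^-1; split;
  [apply/TV/TM|rewrite mulfK // mulf_neq0 ?T_neq0].
Qed.

Lemma hneg_coset x : hneg (cos x : KT) = cos (- x).
Proof.
have [a [Ta /= ->]] := crep_coset x.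
by apply/coset_eq; exists a^-1; split; [apply: TV|rewrite mulNr mulfK ?T_neq0].
Qed.

Lemma hadd_coset x y u : T u -> hadd (cos x : KT) (cos y) (cos (x + y * u)).
Proof. by move=> Tu; exists x, y, u. Qed.

(* 1T + 0T = {1T} and 1T = T: membership of x in T is membership of xT in
   the hypersum 1T + 0T. *)
Lemma T_iff_in_one_plus_zero x : T x <-> hadd (cos 1 : KT) (cos 0) (cos x).
Proof.
split=> [Tx|[x' [y' [t [E1 [E2 [Tt E3]]]]]]].
- rewrite -[cos x](coset_mulT _ (TV Tx)) mulVf ?T_neq0 //.
  by have := hadd_coset 1 0 T1; rewrite mul0r addr0.
- move: E3; move/esym/coset_eq0: E2 => ->; rewrite mul0r addr0.
  move: E1 => /coset_eq [a [Ta ->]] /esym /coset_eq [b [Tb ->]].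
  by rewrite mul1r; apply: TM.
Qed.

Section ValuationOnRepresentatives.
Variables (G : porderZmodType) (w : KT -> option G).
Hypothesis HG : ordered_abelian_group G.
Hypothesis Hw : is_valuation w.

Lemma w_surj (a : option G) : exists x : K, w (cos x) = a.
Proof. by case: Hw => Hs _; have [X <-] := Hs a; exists (crep X); rewrite crepK. Qed.

Lemma w_eq_None x : w (cos x) = None <-> x = 0.
Proof. by case: Hw => _ [Hz _]; rewrite Hz coset_eq0. Qed.

Lemma w_mul x y : w (cos (x * y)) = eadd (w (cos x)) (w (cos y)).
Proof. by case: Hw => _ [_ [Hm _]]; rewrite -hmul_coset Hm. Qed.

Lemma w_ultra x y : eleq (emin (w (cos x)) (w (cos y))) (w (cos (x + y))).
Proof.
case: Hw => _ [_ [_ Hu]]; apply: Hu.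
by have := hadd_coset x y T1; rewrite mulr1.
Qed.

Lemma w_neq0 x : x != 0 -> exists g, w (cos x) = Some g.
Proof.
move=> nx; case E: (w (cos x)) => [g|]; first by exists g.
by move/w_eq_None: E => /eqP; rewrite (negbTE nx).
Qed.

Lemma w_one : w (cos 1) = Some 0.
Proof.
have [g Hg] := w_neq0 (oner_neq0 K).
have := w_mul 1 1; rewrite mulr1 Hg /= => [[gg]].
by congr Some; apply: (addrI g); rewrite addr0.
Qed.

Lemma w_minus_one : w (cos (-1)) = Some 0.
Proof.
have [h Hh] : exists h, w (cos (-1)) = Some h by apply: w_neq0; rewrite oppr_eq0 oner_eq0.
have := w_mul (-1) (-1); rewrite mulrNN mulr1 w_one Hh /= => [[hh]].
by rewrite (ordered_double_eq0 HG (esym hh)).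
Qed.

Lemma w_opp x : w (cos (- x)) = w (cos x).
Proof.
by rewrite -mulN1r w_mul w_minus_one; case: (w (cos x)) => //= c; rewrite add0r.
Qed.

Lemma induced_valuation : is_valuation (fun x : field_hs K => w (cos x)).
Proof.
split; [exact: w_surj|split; [exact: w_eq_None|split; first exact: w_mul]].
by move=> x y z /= ->; apply: w_ultra.
Qed.

Lemma induced_value_group (g : G) :
  (exists x : K, x != 0 /\ w (cos x) = Some g) <->
  (exists X : KT, X <> cos 0 /\ w X = Some g).
Proof.
split=> [[x [nx Hx]]|[X [nX HX]]].
- by exists (cos x); split=> // /coset_eq0/eqP; rewrite (negbTE nx).
- exists (crep X); rewrite crepK; split=> //.
  by apply/eqP => E; apply: nX; rewrite -(crepK X) E.
Qed.

Section KrasnerNorm.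
Variable rho : G -> Prop.
Hypothesis Hinit : initial_segment rho.
Hypothesis Hkvh2 : forall (x y z t : KT) (gamma : G),
  emin (w x) (w y) = Some gamma -> hadd x y z ->
  (hadd x y t <-> forall s : KT, hadd z (hneg t) s -> above_shift rho gamma (w s)).

(* (KVH2) for 1T in 1T + 0T: x is in T iff 1T - xT has values outside rho. *)
Lemma T_iff_difference_outside x :
  T x <-> forall s : KT, hadd (cos 1 : KT) (cos (- x)) s -> outside rho (w s).
Proof.
have Hmin : emin (w (cos 1)) (w (cos 0)) = Some 0.
  by rewrite w_one (proj2 (w_eq_None 0) erefl).
have Hone : hadd (cos 1 : KT) (cos 0) (cos 1) by apply/T_iff_in_one_plus_zero/T1.
rewrite T_iff_in_one_plus_zero (Hkvh2 (cos x) Hmin Hone) hneg_coset.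
by split=> H s /H /above_shift0.
Qed.

Lemma T_outside x : T x -> outside rho (w (cos (x - 1))).
Proof.
move/T_iff_difference_outside => H; rewrite -w_opp opprB; apply: H.
by have := hadd_coset 1 (- x) T1; rewrite mulr1.
Qed.

(* Conversely, every element (a - x u)T of 1T - xT (a, u in T) equals
   a(1 - u/a) + u(1 - x), a sum of two values outside rho. *)
Lemma outside_T x : outside rho (w (cos (x - 1))) -> T x.
Proof.
move=> Hx; apply/T_iff_difference_outside => s.
case=> _ [_ [t [/coset_eq [a [Ta ->]] [/coset_eq [b [Tb ->]] [Tt ->]]]]].
rewrite mul1r; set u := b * t; have Tu : T u by apply: TM.
have -> : a + - x * b * t = a * (1 - u / a) + u * (1 - x).
  rewrite /u mulrBr mulr1 mulrBr mulr1 mulrCA mulfV ?T_neq0 // mulr1.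
  by rewrite !mulNr mulrC mulrA; ring.
apply: (outside_ultra Hinit _ _ (w_ultra _ _)).
- by rewrite coset_mulT // -w_opp opprB; apply: T_outside; apply/TM/TV.
- by rewrite coset_mulT // -w_opp opprB.
Qed.

End KrasnerNorm.
End ValuationOnRepresentatives.
End FactorHyperfield.

Theorem mainTheorem8 (K : fieldType) (T : K -> Prop) (G : porderZmodType)
  (w : factor_hyperfield T -> option G) :
  is_subgroup_units T ->
  ordered_abelian_group G ->
  is_krasner_valuation w ->
  exists (v : field_hs K -> option G) (rho : G -> Prop),
    is_valuation v /\
    (forall g : G, (exists x : K, x != 0 /\ v x = Some g) <->
                   (exists X : factor_hyperfield T, X <> mkcoset T 0 /\ w X = Some g)) /\
    initial_segment rho /\ rho 0 /\
    (forall x : K, T x <-> match v (x - 1) with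
                           | None => True
                           | Some a => ~ rho a
                           end) /\
    (forall x : K, w (mkcoset T x) = v x).
Proof.
move=> HT HG [Hw [_ [rho [Hinit [Hrho0 Hkvh2]]]]].
exists (fun x => w (mkcoset T x)), rho.
split; first exact: induced_valuation.
split; first exact: induced_value_group.
split; first exact: Hinit.
split; first exact: Hrho0.
split=> // x; split.
- exact: T_outside Hkvh2 x.
- exact: outside_T Hkvh2 x.
Qed.
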